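(* Let $E$ be an equivalence relation on $2^\mathbb{N}$. Then $E$ is $\Sigma^0_2$-graphable if and only if $E$ is $\Sigma^0_2$. Moreover, this relativizes: for any real parameter $a$, $E$ is $\Sigma^0_2(a)$-graphable if and only if $E$ is $\Sigma^0_2(a)$.
   Context: For a pointclass $\Gamma$, $E$ is $\Gamma$-graphable if there is a simple undirected graph $G\subseteq 2^\mathbb{N}\times2^\mathbb{N}$ in $\Gamma$ whose connectedness relation (connected by a finite path) equals $E$. $\Sigma^0_2$ is the lightface class. *)

From Stdlib Require Import List Relations.
Import ListNotations.

Definition Cantor := nat -> bool.

Inductive prog : Type :=
| PZero : prog
| PSucc : prog
| PProj : nat -> prog
| POrc  : nat -> prog                (* oracle j queried at first argument: 1 if true, 0 if false *)
| PComp : prog -> list prog -> prog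
| PRec  : prog -> prog -> prog       (* primitive recursion on first argument *)
| PMu   : prog -> prog.              (* least n with f (n :: v) = 0 *)

Inductive eval (O : nat -> Cantor) : prog -> list nat -> nat -> Prop :=
| eZero v : eval O PZero v 0
| eSucc v : eval O PSucc v (S (hd 0 v))
| eProj i v : eval O (PProj i) v (nth i v 0)
| eOrc j v : eval O (POrc j) v (if O j (hd 0 v) then 1 else 0)
| eComp f gs v ws r :
    evals O gs v ws -> eval O f ws r -> eval O (PComp f gs) v r
| eRec0 f g v r : eval O f v r -> eval O (PRec f g) (0 :: v) r
| eRecS f g n v r r' :
    eval O (PRec f g) (n :: v) r -> eval O g (n :: r :: v) r' ->
    eval O (PRec f g) (S n :: v) r'
| eMu f v n :
    eval O f (n :: v) 0 ->
    (forall m, m < n -> exists k, eval O f (m :: v) (S k)) ->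
    eval O (PMu f) v n
with evals (O : nat -> Cantor) : list prog -> list nat -> list nat -> Prop :=
| esNil v : evals O [] v []
| esCons g gs v r rs : eval O g v r -> evals O gs v rs -> evals O (g :: gs) v (r :: rs).

Definition oracle3 (a x y : Cantor) : nat -> Cantor :=
  fun j => match j with 0 => a | 1 => x | 2 => y | _ => fun _ => false end.

(* A ⊆ 2^N x 2^N is Sigma^0_2(a): there is an a-computable relation
   R(m,n,x,y) (a program, total on all inputs with oracles a,x,y; R holds
   iff the output is 0) such that A(x,y) <-> exists m, forall n, R(m,n,x,y). *)
Definition Sigma02_rel (a : Cantor) (A : Cantor -> Cantor -> Prop) : Prop :=
  exists p : prog,
    (forall (x y : Cantor) (m n : nat), exists r, eval (oracle3 a x y) p [m; n] r) /\
    (forall x y : Cantor,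
        A x y <-> exists m : nat, forall n : nat, eval (oracle3 a x y) p [m; n] 0).

(* Lightface Sigma^0_2: relativized to a computable (constant false) oracle. *)
Definition Sigma02 (A : Cantor -> Cantor -> Prop) : Prop :=
  Sigma02_rel (fun _ => false) A.

Definition simple_graph (G : Cantor -> Cantor -> Prop) : Prop :=
  (forall x y, G x y -> G y x) /\ (forall x, ~ G x x).

Definition graphable (Gamma : (Cantor -> Cantor -> Prop) -> Prop)
  (E : Cantor -> Cantor -> Prop) : Prop :=
  exists G : Cantor -> Cantor -> Prop,
    simple_graph G /\ Gamma G /\
    (forall x y, clos_refl_trans Cantor G x y <-> E x y).

From Stdlib Require Import List Relations Lia PeanoNat Cantor
  Classical ClassicalEpsilon FunctionalExtensionality.
Import ListNotations.

(* A Sigma^0_2 equivalence relation [E] is the connectedness relation of the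
   Sigma^0_2 graph "[E] minus the diagonal".

   Conversely, let [G x y <-> exists m, forall k, R m k x y] with [R] computable
   in [a, x, y].  After adding the diagonal (witness [0]), [x] and [y] are
   connected iff for some [n] and witnesses [m_0 .. m_n] there are reals
   [x = z_0, ..., z_(n+1) = y] with [R (m_i) k z_i z_(i+1)] for all [i, k].  For
   fixed [n] and [m_i] the set of such chains is Pi^0_1, and by compactness of
   Cantor space its projection is Pi^0_1 again: a chain exists iff for every [N]
   some assignment of the first [N] bits of the [z_i] is not refuted by a run of
   [R] on a [k < N] that reads only these bits and searches at most [N] steps.
   Such partial runs are carried out by a fuelled interpreter over partial
   oracles, compiled into the oracle language; soundness of the interpreter gives
   one direction and the use principle the other. *)

Section EvalInd.
Variable O : nat -> Cantor.
Variable P : prog -> list nat -> nat -> Prop.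
Variable Ps : list prog -> list nat -> list nat -> Prop.
Hypothesis HZero : forall v, P PZero v 0.
Hypothesis HSucc : forall v, P PSucc v (S (hd 0 v)).
Hypothesis HProj : forall i v, P (PProj i) v (nth i v 0).
Hypothesis HOrc : forall j v, P (POrc j) v (if O j (hd 0 v) then 1 else 0).
Hypothesis HComp : forall f gs v ws r,
  evals O gs v ws -> Ps gs v ws -> eval O f ws r -> P f ws r -> P (PComp f gs) v r.
Hypothesis HRec0 : forall f g v r, eval O f v r -> P f v r -> P (PRec f g) (0 :: v) r.
Hypothesis HRecS : forall f g n v r r',
  eval O (PRec f g) (n :: v) r -> P (PRec f g) (n :: v) r ->
  eval O g (n :: r :: v) r' -> P g (n :: r :: v) r' -> P (PRec f g) (S n :: v) r'.
Hypothesis HMu : forall f v n,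
  eval O f (n :: v) 0 -> P f (n :: v) 0 ->
  (forall m, m < n -> exists k, eval O f (m :: v) (S k) /\ P f (m :: v) (S k)) ->
  P (PMu f) v n.
Hypothesis HNil : forall v, Ps [] v [].
Hypothesis HCons : forall g gs v r rs,
  eval O g v r -> P g v r -> evals O gs v rs -> Ps gs v rs -> Ps (g :: gs) v (r :: rs).

(* The generated scheme gives no induction hypothesis for the failed trials
   of a minimisation, which sit under an existential. *)
Fixpoint eval_mutind p v r (H : eval O p v r) {struct H} : P p v r :=
  match H in eval _ p v r return P p v r with
  | eZero _ v => HZero v
  | eSucc _ v => HSucc v
  | eProj _ i v => HProj i v
  | eOrc _ j v => HOrc j v
  | eComp _ f gs v ws r Hs Hf =>
      HComp f gs v ws r Hs (evals_mutind gs v ws Hs) Hf (eval_mutind f ws r Hf)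
  | eRec0 _ f g v r Hf => HRec0 f g v r Hf (eval_mutind f v r Hf)
  | eRecS _ f g n v r r' H1 H2 =>
      HRecS f g n v r r' H1 (eval_mutind _ _ _ H1) H2 (eval_mutind _ _ _ H2)
  | eMu _ f v n H0 Hl =>
      HMu f v n H0 (eval_mutind _ _ _ H0)
        (fun m Hm => match Hl m Hm with
                     | ex_intro _ k Hk => ex_intro _ k (conj Hk (eval_mutind _ _ _ Hk))
                     end)
  end
with evals_mutind gs v ws (H : evals O gs v ws) {struct H} : Ps gs v ws :=
  match H in evals _ gs v ws return Ps gs v ws with
  | esNil _ v => HNil v
  | esCons _ g gs v r rs Hg Hs =>
      HCons g gs v r rs Hg (eval_mutind _ _ _ Hg) Hs (evals_mutind _ _ _ Hs)
  end.
End EvalInd.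

Lemma eval_det O p v r1 : eval O p v r1 -> forall r2, eval O p v r2 -> r1 = r2.
Proof.
  revert p v r1.
  apply (eval_mutind O (fun p v r1 => forall r2, eval O p v r2 -> r1 = r2)
                       (fun gs v ws => forall ws2, evals O gs v ws2 -> ws = ws2)).
  - intros v r2 H; inversion H; auto.
  - intros v r2 H; inversion H; auto.
  - intros i v r2 H; inversion H; auto.
  - intros j v r2 H; inversion H; auto.
  - intros f gs v ws r _ IHs _ IHf r2 H. inversion H; subst.
    match goal with Hs : evals _ _ _ _ |- _ => apply IHs in Hs; subst end. auto.
  - intros f g v r _ IHf r2 H. inversion H; subst. auto.
  - intros f g n v r r' _ IHr _ IHg r2 H. inversion H; subst.
    match goal with Hr : eval _ (PRec _ _) _ _ |- _ => apply IHr in Hr; subst end. auto.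
  - intros f v n _ IHz IHlt r2 H. inversion H as [| | | | | | |? ? ? Hz Hlt]; subst.
    destruct (Nat.lt_trichotomy n r2) as [Hl|[Hl|Hl]]; auto.
    + destruct (Hlt n Hl) as [k Hk]. apply IHz in Hk. discriminate.
    + destruct (IHlt r2 Hl) as [k [_ Hk]]. apply Hk in Hz. discriminate.
  - intros v ws2 H; inversion H; auto.
  - intros g gs v r rs _ IHg _ IHs ws2 H. inversion H; subst. f_equal; auto.
Qed.

Section ProgInd.
Variable P : prog -> Prop.
Hypothesis HZero : P PZero.
Hypothesis HSucc : P PSucc.
Hypothesis HProj : forall i, P (PProj i).
Hypothesis HOrc : forall j, P (POrc j).
Hypothesis HComp : forall f gs, P f -> Forall P gs -> P (PComp f gs).
Hypothesis HRec : forall f g, P f -> P g -> P (PRec f g).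
Hypothesis HMu : forall f, P f -> P (PMu f).

Fixpoint prog_nested_ind p : P p :=
  match p with
  | PZero => HZero
  | PSucc => HSucc
  | PProj i => HProj i
  | POrc j => HOrc j
  | PComp f gs =>
      HComp f gs (prog_nested_ind f)
        ((fix all gs := match gs return Forall P gs with
                        | [] => Forall_nil _
                        | g :: gs => Forall_cons _ (prog_nested_ind g) (all gs)
                        end) gs)
  | PRec f g => HRec f g (prog_nested_ind f) (prog_nested_ind g)
  | PMu f => HMu f (prog_nested_ind f)
  end.
End ProgInd.

(** * Programming in the oracle language *)

Section Combinators.
Variable O : nat -> Cantor.

Lemma eval_rec_seq f g w (st : nat -> nat) :
  eval O f w (st 0) -> (forall j, eval O g (j :: st j :: w) (st (S j))) ->
  forall n, eval O (PRec f g) (n :: w) (st n).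
Proof. intros H0 HS n; induction n; econstructor; eauto. Qed.

Lemma eval_proj i v r : nth i v 0 = r -> eval O (PProj i) v r.
Proof. intros <-; constructor. Qed.

Lemma eval_comp1 f g v a r :
  eval O g v a -> eval O f [a] r -> eval O (PComp f [g]) v r.
Proof. intros; econstructor; eauto; repeat constructor; auto. Qed.

Lemma eval_comp2 f g1 g2 v a b r :
  eval O g1 v a -> eval O g2 v b -> eval O f [a; b] r -> eval O (PComp f [g1; g2]) v r.
Proof. intros; econstructor; eauto; repeat constructor; auto. Qed.

Lemma eval_comp3 f g1 g2 g3 v a b c r :
  eval O g1 v a -> eval O g2 v b -> eval O g3 v c -> eval O f [a; b; c] r ->
  eval O (PComp f [g1; g2; g3]) v r.
Proof. intros; econstructor; eauto; repeat constructor; auto. Qed.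

Definition porc j g := PComp (POrc j) [g].

Lemma eval_porc j g v q : eval O g v q -> eval O (porc j g) v (Nat.b2n (O j q)).
Proof. intros; eapply eval_comp1; eauto. exact (eOrc O j [q]). Qed.

Fixpoint pconst c := match c with 0 => PZero | S c => PComp PSucc [pconst c] end.
#[global] Arguments pconst : simpl never.

Lemma eval_pconst c v : eval O (pconst c) v c.
Proof. induction c; [constructor|]. eapply eval_comp1; eauto. constructor. Qed.

Definition psucc g := PComp PSucc [g].

Lemma eval_psucc g v a : eval O g v a -> eval O (psucc g) v (S a).
Proof. intros; eapply eval_comp1; eauto. constructor. Qed.

Definition ppred g := PComp (PRec PZero (PProj 0)) [g].

Lemma eval_ppred g v a : eval O g v a -> eval O (ppred g) v (pred a).
Proof.
  intros; eapply eval_comp1; eauto.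
  apply (eval_rec_seq _ _ _ pred); constructor.
Qed.

Definition ifz (t y z : nat) := match t with 0 => y | S _ => z end.
Definition pifz t g h := PComp (PRec (PProj 0) (PProj 3)) [t; g; h].

Lemma eval_pifz t g h v a b c :
  eval O t v a -> eval O g v b -> eval O h v c -> eval O (pifz t g h) v (ifz a b c).
Proof.
  intros; eapply eval_comp3; eauto.
  apply (eval_rec_seq _ _ _ (fun j => ifz j b c)); constructor.
Qed.

Definition padd g h := PComp (PRec (PProj 0) (psucc (PProj 1))) [g; h].

Lemma eval_padd g h v a b : eval O g v a -> eval O h v b -> eval O (padd g h) v (a + b).
Proof.
  intros; eapply eval_comp2; eauto.
  apply (eval_rec_seq _ _ _ (fun j => j + b)); [constructor|].
  intros; apply eval_psucc; constructor.
Qed.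

Definition psub g h := PComp (PRec (PProj 0) (ppred (PProj 1))) [h; g].

Lemma eval_psub g h v a b : eval O g v a -> eval O h v b -> eval O (psub g h) v (a - b).
Proof.
  intros; eapply eval_comp2; eauto.
  apply (eval_rec_seq _ _ _ (fun j => a - j)).
  - rewrite Nat.sub_0_r; constructor.
  - intros j. replace (a - S j) with (pred (a - j)) by lia. apply eval_ppred; constructor.
Qed.

Definition ppow2 g := PComp (PRec (pconst 1) (padd (PProj 1) (PProj 1))) [g].

Lemma eval_ppow2 g v a : eval O g v a -> eval O (ppow2 g) v (2 ^ a).
Proof.
  intros; eapply eval_comp1; eauto.
  apply (eval_rec_seq _ _ _ (fun j => 2 ^ j)); [apply eval_pconst|].
  intros j. replace (2 ^ S j) with (2 ^ j + 2 ^ j) by (simpl; lia).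
  apply eval_padd; constructor.
Qed.

Definition podd g := PComp (PRec PZero (pifz (PProj 1) (pconst 1) (pconst 0))) [g].

Lemma eval_podd g v a : eval O g v a -> eval O (podd g) v (Nat.b2n (Nat.odd a)).
Proof.
  intros; eapply eval_comp1; eauto.
  apply (eval_rec_seq _ _ _ (fun j => Nat.b2n (Nat.odd j))); [constructor|].
  intros j. rewrite Nat.odd_succ, <- Nat.negb_odd.
  replace (Nat.b2n (negb (Nat.odd j))) with (ifz (Nat.b2n (Nat.odd j)) 1 0)
    by (destruct (Nat.odd j); reflexivity).
  apply eval_pifz; [constructor | apply eval_pconst | apply eval_pconst].
Qed.

Definition pdiv2 g := PComp (PRec PZero (padd (PProj 1) (podd (PProj 0)))) [g].

Lemma eval_pdiv2 g v a : eval O g v a -> eval O (pdiv2 g) v (Nat.div2 a).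
Proof.
  intros; eapply eval_comp1; eauto.
  apply (eval_rec_seq _ _ _ Nat.div2); [constructor|].
  intros j.
  replace (Nat.div2 (S j)) with (Nat.div2 j + Nat.b2n (Nat.odd j)).
  - apply eval_padd; [constructor | apply eval_podd; constructor].
  - pose proof (Nat.div2_odd j) as Ej. pose proof (Nat.div2_odd (S j)) as ESj.
    rewrite Nat.odd_succ, <- Nat.negb_odd in ESj.
    destruct (Nat.odd j); simpl in *; lia.
Qed.

Definition ptestbit gc gi := podd (PComp (PRec (PProj 0) (pdiv2 (PProj 1))) [gi; gc]).

Lemma eval_ptestbit gc gi v c i :
  eval O gc v c -> eval O gi v i -> eval O (ptestbit gc gi) v (Nat.b2n (Nat.testbit c i)).
Proof.
  intros. rewrite Nat.testbit_odd. apply eval_podd. eapply eval_comp2; eauto.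
  apply (eval_rec_seq _ _ _ (Nat.shiftr c)); [constructor|].
  intros; apply eval_pdiv2; constructor.
Qed.

Fixpoint tri n := match n with 0 => 0 | S n => tri n + S n end.

Definition ptri g := PComp (PRec PZero (padd (PProj 1) (psucc (PProj 0)))) [g].

Lemma eval_ptri g v a : eval O g v a -> eval O (ptri g) v (tri a).
Proof.
  intros; eapply eval_comp1; eauto.
  apply (eval_rec_seq _ _ _ tri); [constructor|].
  intros; apply eval_padd; [constructor | apply eval_psucc; constructor].
Qed.

Fixpoint tri_root M :=
  match M with
  | 0 => 0
  | S M => tri_root M + ifz (tri (S (tri_root M)) - S M) 1 0
  end.

Lemma tri_mono a b : a <= b -> tri a <= tri b.
Proof. induction 1; simpl; lia. Qed.

Lemma tri_root_spec M : tri (tri_root M) <= M < tri (S (tri_root M)).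
Proof.
  induction M; simpl; [lia|].
  remember (tri_root M) as t. simpl in IHM.
  destruct (tri t + S t - S M) eqn:E; simpl.
  - rewrite Nat.add_1_r. simpl. lia.
  - rewrite Nat.add_0_r. simpl. lia.
Qed.

Definition ptri_root g :=
  PComp (PRec PZero (padd (PProj 1)
    (pifz (psub (ptri (psucc (PProj 1))) (psucc (PProj 0))) (pconst 1) (pconst 0)))) [g].

Lemma eval_ptri_root g v a : eval O g v a -> eval O (ptri_root g) v (tri_root a).
Proof.
  intros; eapply eval_comp1; eauto.
  apply (eval_rec_seq _ _ _ tri_root); [constructor|].
  intros j. apply eval_padd; [constructor|].
  apply eval_pifz; [| apply eval_pconst | apply eval_pconst].
  apply eval_psub; [apply eval_ptri|]; apply eval_psucc; constructor.
Qed.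

Lemma to_nat_tri x y : Cantor.to_nat (x, y) = tri (x + y) + y.
Proof.
  cbn [Cantor.to_nat]. rewrite Nat.add_comm, (Nat.add_comm x). f_equal.
  induction (y + x) as [|n IH]; [reflexivity|].
  change (S n + nat_rec (fun _ => nat) 0 (fun i m => S i + m) n = tri n + S n). lia.
Qed.

Lemma of_nat_tri_root M :
  Cantor.of_nat M = (tri_root M - (M - tri (tri_root M)), M - tri (tri_root M)).
Proof.
  set (u := (_, _)).
  assert (Hu : Cantor.to_nat u = M).
  { unfold u. rewrite to_nat_tri. pose proof (tri_root_spec M) as Hs. simpl in Hs.
    replace (tri_root M - (M - tri (tri_root M)) + (M - tri (tri_root M)))
      with (tri_root M) by lia.
    lia. }
  rewrite <- Hu at 1. apply Cantor.cancel_of_to.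
Qed.

Definition psnd g := psub g (ptri (ptri_root g)).
Definition pfst g := psub (ptri_root g) (psnd g).

Lemma eval_psnd g v a : eval O g v a -> eval O (psnd g) v (snd (Cantor.of_nat a)).
Proof.
  intros. rewrite of_nat_tri_root. apply eval_psub; [|apply eval_ptri, eval_ptri_root]; auto.
Qed.

Lemma eval_pfst g v a : eval O g v a -> eval O (pfst g) v (fst (Cantor.of_nat a)).
Proof.
  intros H. pose proof (eval_psnd g v a H) as Hs.
  rewrite of_nat_tri_root in *. apply eval_psub; [apply eval_ptri_root|]; auto.
Qed.

End Combinators.

(** * Compactness of Cantor space *)

Section ClusterPoint.
Variable g : nat -> nat -> bool.

Definition prefix_recurs (s : list bool) :=
  forall l0, exists l, l0 <= l /\ forall j, j < length s -> g l j = nth j s false.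

Lemma prefix_recurs_extend s :
  prefix_recurs s -> prefix_recurs (s ++ [true]) \/ prefix_recurs (s ++ [false]).
Proof.
  intros H. apply NNPP. intros [N1 N2]%not_or_and.
  apply not_all_ex_not in N1 as [l1 N1]. apply not_all_ex_not in N2 as [l2 N2].
  destruct (H (max l1 l2)) as [l [Hl Hs]].
  assert (Hext : forall j, j < length (s ++ [g l (length s)]) ->
                   g l j = nth j (s ++ [g l (length s)]) false).
  { intros j Hj. rewrite length_app in Hj; simpl in Hj.
    destruct (Nat.eq_dec j (length s)) as [->|].
    - rewrite app_nth2, Nat.sub_diag by lia. reflexivity.
    - rewrite app_nth1 by lia. apply Hs. lia. }
  destruct (g l (length s)) eqn:E; [apply N1 | apply N2]; exists l; split; auto; lia.
Qed.

Fixpoint recurring_branch n : list bool :=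
  match n with
  | 0 => []
  | S n =>
      let s := recurring_branch n in
      s ++ [if excluded_middle_informative (prefix_recurs (s ++ [true])) then true else false]
  end.

Lemma recurring_branch_length n : length (recurring_branch n) = n.
Proof. induction n; simpl; [|rewrite length_app; simpl]; lia. Qed.

Lemma recurring_branch_recurs n : prefix_recurs (recurring_branch n).
Proof.
  induction n; simpl.
  - intros l0; exists l0; split; simpl; auto; lia.
  - destruct excluded_middle_informative; auto.
    destruct (prefix_recurs_extend _ IHn); tauto.
Qed.

Lemma recurring_branch_prefix n m j :
  n <= m -> j < n -> nth j (recurring_branch m) false = nth j (recurring_branch n) false.
Proof.
  induction 1; auto. intros Hj. simpl. rewrite app_nth1; auto.
  rewrite recurring_branch_length; lia.
Qed.

Lemma cantor_cluster_point : exists Z : Cantor,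
  forall L l0, exists l, l0 <= l /\ forall j, j < L -> g l j = Z j.
Proof.
  exists (fun j => nth j (recurring_branch (S j)) false). intros L l0.
  destruct (recurring_branch_recurs L l0) as [l [Hl Hj]]. exists l; split; auto.
  intros j HjL. rewrite Hj by (rewrite recurring_branch_length; auto).
  apply recurring_branch_prefix; lia.
Qed.
End ClusterPoint.

(** * Evaluation against finite approximations of the oracles *)

(* Results are shifted by one: [0] means "undetermined", [S r] means [r]. *)
Fixpoint rec_partial (b : nat) (h : nat -> nat -> nat) n :=
  match n with
  | 0 => b
  | S n => let r := rec_partial b h n in ifz r 0 (h n (pred r))
  end.

(* State of a minimisation after [n] trials: [0] still searching, [1] stuck on
   an undetermined trial, [S (S j)] found the first zero at [j]. *)
Fixpoint search_partial (h : nat -> nat) n :=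
  match n with
  | 0 => 0
  | S j =>
      let s := search_partial h j in
      ifz s (ifz (h j) 1 (ifz (pred (h j)) (S (S j)) 0)) s
  end.

(* Oracle 0 is [a]; oracles 1 and 2 are known through [L1], [L2], where [0]
   stands for an unknown bit and [S b] for the bit [b]; a minimisation gives up
   after [fuel] trials. *)
Fixpoint peval (a : Cantor) (L1 L2 : nat -> nat) (fuel : nat) (p : prog) (v : list nat)
  : nat :=
  match p with
  | PZero => 1
  | PSucc => S (S (hd 0 v))
  | PProj j => S (nth j v 0)
  | POrc 0 => S (Nat.b2n (a (hd 0 v)))
  | POrc 1 => L1 (hd 0 v)
  | POrc 2 => L2 (hd 0 v)
  | POrc _ => 1
  | PComp f gs =>
      let rs := map (fun g => peval a L1 L2 fuel g v) gs in
      if forallb (fun r => negb (r =? 0)) rs then peval a L1 L2 fuel f (map pred rs) else 0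
  | PRec f g =>
      match v with
      | [] => 0
      | n :: w => rec_partial (peval a L1 L2 fuel f w)
                    (fun j r => peval a L1 L2 fuel g (j :: r :: w)) n
      end
  | PMu f => pred (search_partial (fun j => peval a L1 L2 fuel f (j :: v)) fuel)
  end.

Lemma search_partial_searching h n :
  search_partial h n = 0 -> forall j, j < n -> exists k, h j = S (S k).
Proof.
  induction n; simpl; intros H j Hj; [lia|].
  destruct (search_partial h n); simpl in H; try discriminate.
  destruct (h n) as [|[|k]] eqn:Eh; simpl in H; try discriminate.
  destruct (Nat.eq_dec j n) as [->|]; eauto. apply IHn; auto; lia.
Qed.

Lemma search_partial_found h n r :
  search_partial h n = S (S r) -> h r = 1 /\ forall j, j < r -> exists k, h j = S (S k).
Proof.
  induction n; simpl; intros H; [discriminate|].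
  destruct (search_partial h n) eqn:E; simpl in H; auto.
  destruct (h n) as [|[|k]] eqn:Eh; simpl in H; try discriminate.
  injection H as <-. split; auto. apply search_partial_searching; auto.
Qed.

Lemma search_partial_complete h n :
  h n = 1 -> (forall m, m < n -> exists k, h m = S (S k)) ->
  forall fuel, n < fuel -> search_partial h fuel = S (S n).
Proof.
  intros Hn Hm.
  assert (Hsearch : forall j, j <= n -> search_partial h j = 0).
  { induction j; simpl; intros; auto. rewrite IHj by lia. simpl.
    destruct (Hm j) as [k ->]; auto; lia. }
  induction fuel; intros Hf; [lia|].
  simpl. destruct (Nat.eq_dec n fuel) as [<-|].
  - rewrite Hsearch by lia. simpl. rewrite Hn. auto.
  - rewrite IHfuel by lia. auto.
Qed.

Section PartialEval.
Variables a x y : Cantor.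

Section Sound.
Variables L1 L2 : nat -> nat.
Variable fuel : nat.
Hypothesis HL1 : forall q, L1 q = 0 \/ L1 q = S (Nat.b2n (x q)).
Hypothesis HL2 : forall q, L2 q = 0 \/ L2 q = S (Nat.b2n (y q)).

Lemma peval_sound p : forall v r, peval a L1 L2 fuel p v = S r -> eval (oracle3 a x y) p v r.
Proof.
  induction p as [| | | |f gs IHf IHgs|f g IHf IHg|f IHf] using prog_nested_ind;
    simpl; intros v r H.
  - injection H as <-; constructor.
  - injection H as <-; constructor.
  - injection H as <-; constructor.
  - destruct j as [|[|[|j]]].
    + injection H as <-. apply (eOrc (oracle3 a x y) 0).
    + destruct (HL1 (hd 0 v)) as [E|E]; rewrite E in H; [discriminate|].
      injection H as <-. apply (eOrc (oracle3 a x y) 1).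
    + destruct (HL2 (hd 0 v)) as [E|E]; rewrite E in H; [discriminate|].
      injection H as <-. apply (eOrc (oracle3 a x y) 2).
    + injection H as <-. apply (eOrc (oracle3 a x y) (S (S (S j)))).
  - destruct forallb eqn:E; [|discriminate].
    econstructor; [|apply IHf, H]. clear H IHf.
    induction gs as [|g gs IH]; simpl in *; [constructor|].
    inversion IHgs; subst. apply Bool.andb_true_iff in E as [E1 E2].
    constructor; auto. destruct (peval a L1 L2 fuel g v) eqn:Eg; [discriminate|]. auto.
  - destruct v as [|n w]; [discriminate|].
    revert r H. induction n; simpl; intros r H; [constructor; auto|].
    destruct rec_partial eqn:E; simpl in H; [discriminate|].
    econstructor; eauto.
  - destruct search_partial as [|[|s]] eqn:E; simpl in H; try discriminate.
    injection H as <-. apply search_partial_found in E as [E1 E2].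
    constructor; auto.
    intros m Hm. destruct (E2 m Hm) as [k Hk]. exists k. auto.
Qed.
End Sound.

Definition approximates_below (B : nat) (L1 L2 : nat -> nat) :=
  forall q, q < B -> L1 q = S (Nat.b2n (x q)) /\ L2 q = S (Nat.b2n (y q)).

Lemma approximates_below_mono B B' L1 L2 :
  B <= B' -> approximates_below B' L1 L2 -> approximates_below B L1 L2.
Proof. intros ? H q ?; apply H; lia. Qed.

Definition peval_settled p v r B := forall fuel L1 L2,
  B <= fuel -> approximates_below B L1 L2 -> peval a L1 L2 fuel p v = S r.

Lemma peval_settled_mono p v r B B' :
  B <= B' -> peval_settled p v r B -> peval_settled p v r B'.
Proof. intros ? H ? ? ? ? ?. apply H; [lia|]. eapply approximates_below_mono; eauto. Qed.

Lemma bound_below_uniform (P : nat -> nat -> Prop) n :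
  (forall m B B', B <= B' -> P m B -> P m B') ->
  (forall m, m < n -> exists B, P m B) -> exists B, forall m, m < n -> P m B.
Proof.
  intros Hmono; induction n; intros H; [exists 0; intros; lia|].
  destruct IHn as [B1 HB1]; [intros; apply H; lia|].
  destruct (H n) as [B2 HB2]; [lia|].
  exists (max B1 B2). intros m Hm. destruct (Nat.eq_dec m n) as [->|].
  - eapply Hmono; [|exact HB2]; lia.
  - eapply Hmono; [|apply HB1]; lia.
Qed.

(* The use principle: a terminating computation reads only finitely many bits
   and performs only finitely many trials. *)
Lemma peval_complete p v r : eval (oracle3 a x y) p v r -> exists B, peval_settled p v r B.
Proof.
  revert p v r.
  apply (eval_mutind (oracle3 a x y) (fun p v r => exists B, peval_settled p v r B)
    (fun gs v ws => exists B, forall fuel L1 L2, B <= fuel -> approximates_below B L1 L2 ->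
        map (fun g => peval a L1 L2 fuel g v) gs = map S ws));
    unfold peval_settled.
  - exists 0; intros; reflexivity.
  - exists 0; intros; reflexivity.
  - exists 0; intros; reflexivity.
  - intros [|[|[|j]]] v; [exists 0| exists (S (hd 0 v))| exists (S (hd 0 v))| exists 0];
      intros fuel L1 L2 _ HL; simpl; auto; destruct (HL (hd 0 v)); auto.
  - intros f gs v ws r _ [B1 H1] _ [B2 H2]. exists (max B1 B2). intros fuel L1 L2 Hf HL.
    simpl. rewrite H1; [|lia|eapply approximates_below_mono; [|exact HL]; lia].
    replace (forallb _ (map S ws)) with true by (clear; induction ws; auto).
    rewrite map_map, map_id. apply H2; [lia|eapply approximates_below_mono; [|exact HL]; lia].
  - intros f g v r _ [B H]. exists B. exact H.
  - intros f g n v r r' _ [B1 H1] _ [B2 H2]. exists (max B1 B2). intros fuel L1 L2 Hf HL.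
    simpl in H1 |- *.
    rewrite H1; [|lia|eapply approximates_below_mono; [|exact HL]; lia]. simpl.
    apply H2; [lia|eapply approximates_below_mono; [|exact HL]; lia].
  - intros f v n _ [B0 H0] Htrials.
    destruct (bound_below_uniform (fun m B => exists k, peval_settled f (m :: v) (S k) B) n)
      as [B1 H1].
    { intros m B B' HB [k Hk]. exists k. eapply peval_settled_mono; eauto. }
    { intros m Hmn. destruct (Htrials m Hmn) as [k [_ [B HB]]]. eauto. }
    exists (max (S n) (max B0 B1)). intros fuel L1 L2 Hf HL. simpl.
    rewrite (search_partial_complete _ n); [reflexivity | | | lia].
    + apply H0; [lia|eapply approximates_below_mono; [|exact HL]; lia].
    + intros m Hmn. destruct (H1 m Hmn) as [k Hk]. exists k.
      apply Hk; [lia|eapply approximates_below_mono; [|exact HL]; lia].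
  - exists 0; intros; reflexivity.
  - intros g gs v r rs _ [B1 H1] _ [B2 H2]. exists (max B1 B2). intros fuel L1 L2 Hf HL.
    simpl. rewrite H1, H2; try reflexivity; try lia.
    all: eapply approximates_below_mono; [|exact HL]; lia.
Qed.
End PartialEval.

(** * Compiling approximate evaluation into the oracle language *)

Definition pprojs off len := map (fun t => PProj (off + t)) (seq 0 len).

Lemma evals_map O {A} (h : A -> prog) (val : A -> nat) idx u :
  (forall t, In t idx -> eval O (h t) u (val t)) -> evals O (map h idx) u (map val idx).
Proof. induction idx; simpl; intros; constructor; auto. Qed.

Lemma evals_app O gs hs u ws1 ws2 :
  evals O gs u ws1 -> evals O hs u ws2 -> evals O (gs ++ hs) u (ws1 ++ ws2).
Proof. induction 1; simpl; intros; auto. constructor; auto. Qed.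

Lemma map_nth_seq (l : list nat) : map (fun t => nth t l 0) (seq 0 (length l)) = l.
Proof.
  induction l; simpl; auto. f_equal. rewrite <- seq_shift, map_map. auto.
Qed.

Lemma map_nth_middle pre l suf :
  map (fun t => nth (length pre + t) (pre ++ l ++ suf) 0) (seq 0 (length l)) = l.
Proof.
  rewrite <- (map_nth_seq l) at 2. apply map_ext_in. intros t Ht%in_seq.
  rewrite app_nth2, Nat.add_comm, Nat.add_sub, app_nth1; auto; lia.
Qed.

Lemma map_nth_end pre l :
  map (fun t => nth (length pre + t) (pre ++ l) 0) (seq 0 (length l)) = l.
Proof. pose proof (map_nth_middle pre l []) as H. rewrite app_nil_r in H. exact H. Qed.

Lemma evals_pprojs O off len pre l suf u :
  u = pre ++ l ++ suf -> off = length pre -> len = length l -> evals O (pprojs off len) u l.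
Proof.
  intros -> -> ->.
  pose proof (evals_map O (fun t => PProj (length pre + t))
                (fun t => nth (length pre + t) (pre ++ l ++ suf) 0)
                (seq 0 (length l)) (pre ++ l ++ suf)) as H.
  rewrite map_nth_middle in H. apply H. intros; constructor.
Qed.

Lemma forallb_map {A B} (f : B -> bool) (g : A -> B) l :
  forallb f (map g l) = forallb (fun x => f (g x)) l.
Proof. induction l; simpl; congruence. Qed.

Definition pguard ne k body :=
  fold_right (fun i acc => pifz (PProj (ne + i)) (pconst 0) acc) body (seq 0 k).

Lemma eval_pguard O ne k body r u : eval O body u r ->
  eval O (pguard ne k body) u
    (if forallb (fun i => negb (nth (ne + i) u 0 =? 0)) (seq 0 k) then r else 0).
Proof.
  unfold pguard. intros Hb. induction (seq 0 k) as [|i idx IH]; simpl; auto.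
  replace (if andb _ _ then r else 0) with
    (ifz (nth (ne + i) u 0) 0
       (if forallb (fun i => negb (nth (ne + i) u 0 =? 0)) idx then r else 0))
    by (destruct (nth (ne + i) u 0); reflexivity).
  apply eval_pifz; [constructor | apply eval_pconst | exact IH].
Qed.

Section Compile.
Variable ne : nat.
Variables l1 l2 : prog.

(* [compile p k] runs [peval] on arguments [ext ++ v] with [length ext = ne] and
   [length v = k]; the first extra argument is the fuel and [l1], [l2], called on
   [ext ++ [q]], play the partial oracles. *)
Fixpoint compile (p : prog) (k : nat) : prog :=
  let ext := pprojs 0 ne in
  let hd := match k with 0 => pconst 0 | _ => PProj ne end in
  match p with
  | PZero => pconst 1
  | PSucc => psucc (psucc hd)
  | PProj j => if j <? k then psucc (PProj (ne + j)) else pconst 1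
  | POrc 0 => psucc (porc 0 hd)
  | POrc 1 => PComp l1 (ext ++ [hd])
  | POrc 2 => PComp l2 (ext ++ [hd])
  | POrc _ => pconst 1
  | PComp f gs =>
      let k' := length gs in
      PComp (pguard ne k'
               (PComp (compile f k') (ext ++ map (fun i => ppred (PProj (ne + i))) (seq 0 k'))))
            (ext ++ map (fun g => compile g k) gs)
  | PRec f g =>
      match k with
      | 0 => pconst 0
      | S k' =>
          PComp (PRec (compile f k')
                   (pifz (PProj 1) (pconst 0)
                      (PComp (compile g (S (S k')))
                         (pprojs 2 ne ++ [PProj 0; ppred (PProj 1)] ++ pprojs (2 + ne) k'))))
                (PProj ne :: ext ++ pprojs (ne + 1) k')
      end
  | PMu f =>
      let trial := PComp (compile f (S k)) (pprojs 2 ne ++ [PProj 0] ++ pprojs (2 + ne) k) in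
      ppred (PComp (PRec (pconst 0)
                      (pifz (PProj 1)
                         (pifz trial (pconst 1)
                            (pifz (ppred trial) (psucc (psucc (PProj 0))) (pconst 0)))
                         (PProj 1)))
               (PProj 0 :: ext ++ pprojs ne k))
  end.
End Compile.

Section CompileCorrect.
Variable O : nat -> Cantor.
Variable a : Cantor.
Variables L1 L2 : nat -> nat.
Variables l1 l2 : prog.
Variable ext : list nat.
Let ne := length ext.
Let fuel := nth 0 ext 0.
Hypothesis Hne : 0 < ne.
Hypothesis HO : O 0 = a.
Hypothesis Hl1 : forall q, eval O l1 (ext ++ [q]) (L1 q).
Hypothesis Hl2 : forall q, eval O l2 (ext ++ [q]) (L2 q).

Definition compiles p :=
  forall v, eval O (compile ne l1 l2 p (length v)) (ext ++ v) (peval a L1 L2 fuel p v).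

Lemma evals_ext u suf : u = ext ++ suf -> evals O (pprojs 0 ne) u ext.
Proof. intros ->. apply (evals_pprojs O 0 ne [] ext suf); auto. Qed.

Lemma eval_compile_hd v :
  eval O (match length v with 0 => pconst 0 | _ => PProj ne end) (ext ++ v) (hd 0 v).
Proof.
  destruct v; simpl; [apply eval_pconst|].
  apply eval_proj. rewrite app_nth2, Nat.sub_diag; auto.
Qed.

Lemma compile_orc_correct j : compiles (POrc j).
Proof.
  intros v. destruct j as [|[|[|j]]]; simpl.
  - apply eval_psucc. rewrite <- HO. apply eval_porc, eval_compile_hd.
  - econstructor; [|apply Hl1].
    apply evals_app; [apply (evals_ext _ v); auto|]. repeat constructor. apply eval_compile_hd.
  - econstructor; [|apply Hl2].
    apply evals_app; [apply (evals_ext _ v); auto|]. repeat constructor. apply eval_compile_hd.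
  - apply eval_pconst.
Qed.

Lemma compile_comp_correct f gs :
  compiles f -> Forall compiles gs -> compiles (PComp f gs).
Proof.
  intros IHf IHgs v. simpl.
  set (rs := map (fun g => peval a L1 L2 fuel g v) gs).
  assert (Hrs : length rs = length gs) by apply length_map.
  econstructor.
  - apply evals_app; [apply (evals_ext _ v); auto|].
    apply evals_map. intros g Hg. rewrite Forall_forall in IHgs. apply IHgs; auto.
  - fold rs. rewrite <- Hrs.
    replace (forallb _ rs) with
      (forallb (fun i => negb (nth (ne + i) (ext ++ rs) 0 =? 0)) (seq 0 (length rs))).
    2: { rewrite <- (forallb_map (fun r => negb (r =? 0)) (fun i => nth (ne + i) (ext ++ rs) 0)).
         unfold ne. rewrite map_nth_end. reflexivity. }
    apply eval_pguard. econstructor; [|rewrite <- (length_map pred rs); apply IHf].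
    apply evals_app; [apply (evals_ext _ rs); auto|].
    replace (map pred rs)
      with (map (fun i => pred (nth (ne + i) (ext ++ rs) 0)) (seq 0 (length rs))).
    + apply evals_map. intros; apply eval_ppred; constructor.
    + rewrite <- map_map with (f := fun i => nth (ne + i) (ext ++ rs) 0).
      unfold ne. rewrite map_nth_end. reflexivity.
Qed.

Lemma compile_rec_correct f g : compiles f -> compiles g -> compiles (PRec f g).
Proof.
  intros IHf IHg [|n w]; simpl; [apply eval_pconst|].
  econstructor.
  - constructor.
    + apply eval_proj. rewrite app_nth2, Nat.sub_diag; auto.
    + apply evals_app; [apply (evals_ext _ (n :: w)); auto|].
      apply (evals_pprojs O _ _ (ext ++ [n]) w []);
        [rewrite app_nil_r, <- app_assoc; auto | rewrite length_app; simpl; unfold ne; lia | auto].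
  - set (st := rec_partial (peval a L1 L2 fuel f w)
                  (fun j r => peval a L1 L2 fuel g (j :: r :: w))).
    apply (eval_rec_seq O _ _ _ st); [apply IHf|].
    intros j. change (st (S j)) with (ifz (st j) 0 (peval a L1 L2 fuel g (j :: pred (st j) :: w))).
    apply eval_pifz; [constructor | apply eval_pconst|].
    econstructor; [|apply (IHg (j :: pred (st j) :: w))].
    apply evals_app; [apply (evals_pprojs O 2 ne [j; st j] ext w); auto|].
    constructor; [constructor|]. constructor; [apply eval_ppred; constructor|].
    apply (evals_pprojs O _ _ ([j; st j] ++ ext) w []); simpl; try rewrite app_nil_r; auto.
Qed.

Lemma compile_mu_correct f : compiles f -> compiles (PMu f).
Proof.
  intros IHf v. simpl. apply eval_ppred. econstructor.
  - constructor.
    + apply (eval_proj O 0 _ fuel). rewrite app_nth1; auto.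
    + apply evals_app; [apply (evals_ext _ v); auto|].
      apply (evals_pprojs O _ _ ext v []); try rewrite app_nil_r; auto.
  - set (h := fun j => peval a L1 L2 fuel f (j :: v)).
    apply (eval_rec_seq O _ _ _ (search_partial h)); [apply eval_pconst|].
    intros j. simpl.
    assert (Htrial : eval O (PComp (compile ne l1 l2 f (S (length v)))
                                   (pprojs 2 ne ++ [PProj 0] ++ pprojs (2 + ne) (length v)))
                       (j :: search_partial h j :: ext ++ v) (h j)).
    { econstructor; [|apply (IHf (j :: v))].
      apply evals_app; [apply (evals_pprojs O 2 ne [j; search_partial h j] ext v); auto|].
      constructor; [constructor|].
      apply (evals_pprojs O _ _ ([j; search_partial h j] ++ ext) v []);
        simpl; try rewrite app_nil_r; auto. }
    apply eval_pifz; [constructor| |constructor].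
    apply eval_pifz; [exact Htrial | apply eval_pconst|].
    apply eval_pifz; [apply eval_ppred, Htrial | apply eval_psucc, eval_psucc; constructor
                     | apply eval_pconst].
Qed.

Lemma compile_correct p : compiles p.
Proof.
  induction p using prog_nested_ind.
  - intros v. apply eval_pconst.
  - intros v. apply eval_psucc, eval_psucc, eval_compile_hd.
  - intros v. simpl. destruct (Nat.ltb_spec i (length v)).
    + apply eval_psucc, eval_proj. rewrite app_nth2; [|unfold ne; lia].
      f_equal. unfold ne; lia.
    + rewrite nth_overflow by lia. apply eval_pconst.
  - apply compile_orc_correct.
  - apply compile_comp_correct; auto.
  - apply compile_rec_correct; auto.
  - apply compile_mu_correct; auto.
Qed.
End CompileCorrect.

Fixpoint bsum (h : nat -> nat) n := match n with 0 => 0 | S n => bsum h n + h n end.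
Fixpoint bex0 (h : nat -> nat) n := match n with 0 => 1 | S n => ifz (bex0 h n) 0 (h n) end.

Lemma bsum_eq0 h n : bsum h n = 0 <-> forall j, j < n -> h j = 0.
Proof.
  induction n; simpl; [split; intros; auto; lia|].
  rewrite Nat.eq_add_0, IHn. split.
  - intros [H1 H2] j Hj. destruct (Nat.eq_dec j n) as [->|]; auto. apply H1; lia.
  - intros H. split; auto.
Qed.

Lemma bex0_eq0 h n : bex0 h n = 0 <-> exists j, j < n /\ h j = 0.
Proof.
  induction n; simpl; [split; [discriminate | intros [j [Hj _]]; lia]|].
  destruct (bex0 h n) eqn:E; simpl.
  - split; auto. intros _. destruct (proj1 IHn eq_refl) as [j [Hj Hh]]. exists j; split; auto.
  - split; [intros H; exists n; auto|].
    intros [j [Hj Hh]]. destruct (Nat.eq_dec j n) as [->|]; auto.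
    assert (H : exists j, j < n /\ h j = 0) by (exists j; split; auto; lia).
    apply IHn in H. discriminate.
Qed.

Section BoundedQuantifiers.
Variable O : nat -> Cantor.
Variable k : nat.
Variable h : prog.

Definition pbsum := PRec (pconst 0) (padd (PProj 1) (PComp h (PProj 0 :: pprojs 2 k))).
Definition pbex0 :=
  PRec (pconst 1) (pifz (PProj 1) (pconst 0) (PComp h (PProj 0 :: pprojs 2 k))).

Variable w : list nat.
Variable val : nat -> nat.
Hypothesis Hw : length w = k.
Hypothesis Hh : forall j, eval O h (j :: w) (val j).

Lemma eval_pbody j s : eval O (PComp h (PProj 0 :: pprojs 2 k)) (j :: s :: w) (val j).
Proof.
  econstructor; [|apply Hh]. constructor; [constructor|].
  apply (evals_pprojs O _ _ [j; s] w []); simpl; try rewrite app_nil_r; auto.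
Qed.

Lemma eval_pbsum n : eval O pbsum (n :: w) (bsum val n).
Proof.
  apply (eval_rec_seq O _ _ _ (bsum val)); [apply eval_pconst|].
  intros j. apply eval_padd; [constructor | apply eval_pbody].
Qed.

Lemma eval_pbex0 n : eval O pbex0 (n :: w) (bex0 val n).
Proof.
  apply (eval_rec_seq O _ _ _ (bex0 val)); [apply eval_pconst|].
  intros j. apply eval_pifz; [constructor | apply eval_pconst | apply eval_pbody].
Qed.
End BoundedQuantifiers.

Fixpoint encode_list (l : list nat) :=
  match l with [] => 0 | m :: l => Cantor.to_nat (m, encode_list l) end.

Definition decode_nth i code :=
  fst (Cantor.of_nat (Nat.iter i (fun r => snd (Cantor.of_nat r)) code)).

Lemma decode_encode_list l i : i < length l -> decode_nth i (encode_list l) = nth i l 0.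
Proof.
  unfold decode_nth. revert i; induction l as [|m l IH]; intros i Hi; [simpl in Hi; lia|].
  destruct i as [|i]; cbn [encode_list nth].
  - change (fst (Cantor.of_nat (Cantor.to_nat (m, encode_list l))) = m).
    rewrite Cantor.cancel_of_to. reflexivity.
  - rewrite <- IH by (simpl in Hi; lia). rewrite Nat.iter_succ_r, Cantor.cancel_of_to.
    reflexivity.
Qed.

Definition pdecode_nth gi gc :=
  pfst (PComp (PRec (PProj 0) (psnd (PProj 1))) [gi; gc]).

Lemma eval_pdecode_nth O gi gc v i c :
  eval O gi v i -> eval O gc v c -> eval O (pdecode_nth gi gc) v (decode_nth i c).
Proof.
  intros. apply eval_pfst. eapply eval_comp2; eauto.
  apply (eval_rec_seq O _ _ _ (fun j => Nat.iter j (fun r => snd (Cantor.of_nat r)) c));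
    [constructor|].
  intros; apply eval_psnd; constructor.
Qed.

Lemma testbit_interpolate n (f : nat -> bool) :
  exists c, c < 2 ^ n /\ forall i, i < n -> Nat.testbit c i = f i.
Proof.
  revert f; induction n; intros f; [exists 0; split; [simpl|intros]; lia|].
  destruct (IHn (fun i => f (S i))) as [c [Hc Hbits]].
  exists (2 * c + Nat.b2n (f 0)). split; [destruct (f 0); simpl in *; lia|].
  intros [|i] Hi; [apply Nat.testbit_0_r|].
  rewrite Nat.testbit_succ_r. apply Hbits. lia.
Qed.

Definition pxor g h := pifz g h (pifz h (pconst 1) (pconst 0)).

Lemma eval_pxor O g h v b1 b2 :
  eval O g v (Nat.b2n b1) -> eval O h v (Nat.b2n b2) -> eval O (pxor g h) v (Nat.b2n (xorb b1 b2)).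
Proof.
  intros. replace (Nat.b2n (xorb b1 b2)) with
    (ifz (Nat.b2n b1) (Nat.b2n b2) (ifz (Nat.b2n b2) 1 0)) by (destruct b1, b2; reflexivity).
  repeat apply eval_pifz; auto; apply eval_pconst.
Qed.

(** * Chains of [Pi^0_1] links *)

Section Chains.
Variable a : Cantor.
Variable p : prog.

Definition link m u w := forall k, eval (oracle3 a u w) p [m; k] 0.

Definition linked x y := exists n (ms : nat -> nat) (z : nat -> Cantor),
  z 0 = x /\ z (S n) = y /\ forall i, i <= n -> link (ms i) (z i) (z (S i)).

(* The [i]-th member of a chain of [nn] links from [x] to [y], whose inner
   members are stored in [c] at the bit positions [Cantor.to_nat (i, q)]; it
   is known below [l], in the format of the partial oracles of [peval]. *)
Definition chain_bit (x y : Cantor) c nn i q :=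
  ifz i (Nat.b2n (x q))
    (ifz ((i - nn) + (nn - i)) (Nat.b2n (y q))
       (Nat.b2n (Nat.testbit c (Cantor.to_nat (i, q))))).

Definition chain_approx x y l c nn i q := ifz (l - q) 0 (S (chain_bit x y c nn i q)).

Lemma chain_approx_unknown x y l c nn i q : l <= q -> chain_approx x y l c nn i q = 0.
Proof. intros. unfold chain_approx. replace (l - q) with 0 by lia. reflexivity. Qed.

Lemma chain_approx_known x y l c nn (z : nat -> Cantor) i q :
  z 0 = x -> z nn = y -> i <= nn -> q < l ->
  (0 < i < nn -> Nat.testbit c (Cantor.to_nat (i, q)) = z i q) ->
  chain_approx x y l c nn i q = S (Nat.b2n (z i q)).
Proof.
  intros <- <- Hi Hq Hc. unfold chain_approx, chain_bit.
  replace (l - q) with (S (l - q - 1)) by lia. cbn [ifz]. f_equal.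
  destruct i as [|i]; [reflexivity|]. cbn [ifz].
  destruct (S i - nn + (nn - S i)) eqn:E; cbn [ifz].
  - replace nn with (S i) by lia. reflexivity.
  - rewrite Hc by lia. reflexivity.
Qed.

(* Arguments [l; c; i; nn; q]; the program [gi] computes the index of the member. *)
Definition pchain_approx gi :=
  pifz (psub (PProj 0) (PProj 4)) (pconst 0)
    (psucc (pifz gi (porc 1 (PProj 4))
              (pifz (padd (psub gi (PProj 3)) (psub (PProj 3) gi)) (porc 2 (PProj 4))
                 (ptestbit (PProj 1) (padd (ptri (padd gi (PProj 4))) (PProj 4)))))).

Section Matrix.
Variables x y : Cantor.
Let O := oracle3 a x y.

Lemma eval_pchain_approx gi l c i nn q j :
  eval O gi [l; c; i; nn; q] j ->
  eval O (pchain_approx gi) [l; c; i; nn; q] (chain_approx x y l c nn j q).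
Proof.
  intros Hi. apply eval_pifz; [apply eval_psub; constructor | apply eval_pconst|].
  apply eval_psucc. apply eval_pifz; [exact Hi | apply (eval_porc O 1); constructor|].
  apply eval_pifz; [apply eval_padd; apply eval_psub; auto; constructor
                   | apply (eval_porc O 2); constructor|].
  rewrite to_nat_tri. apply eval_ptestbit; [constructor|].
  apply eval_padd; [apply eval_ptri, eval_padd|]; auto; constructor.
Qed.

Definition psim := compile 4 (pchain_approx (PProj 2)) (pchain_approx (psucc (PProj 2))) p 2.

Lemma eval_psim l c i nn m k :
  eval O psim [l; c; i; nn; m; k]
    (peval a (chain_approx x y l c nn i) (chain_approx x y l c nn (S i)) l p [m; k]).
Proof.
  refine (compile_correct O a _ _ _ _ [l; c; i; nn] _ eq_refl _ _ p [m; k]).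
  - simpl; lia.
  - intros q. apply eval_pchain_approx. constructor.
  - intros q. apply eval_pchain_approx. apply eval_psucc. constructor.
Qed.

(* An undetermined run passes: only a definite nonzero output refutes a link. *)
Definition trial l c nn i m k :=
  ifz (pred (peval a (chain_approx x y l c nn i) (chain_approx x y l c nn (S i)) l p [m; k])) 0 1.

(* [M] codes the number of links minus one and the list of their witnesses. *)
Definition chain_matrix M N :=
  let nn := S (fst (Cantor.of_nat M)) in
  let code := snd (Cantor.of_nat M) in
  bex0 (fun c => bsum (fun i => bsum (fun k => trial N c nn i (decode_nth i code) k) N) nn)
       (2 ^ tri (N + nn)).

End Matrix.

Definition pnlinks gM := psucc (pfst gM).

(* Arguments [k; i; c; N; M]. *)
Definition ptrial :=
  pifz (ppred (PComp psim [PProj 3; PProj 2; PProj 1; pnlinks (PProj 4);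
                           pdecode_nth (PProj 1) (psnd (PProj 4)); PProj 0]))
       (pconst 0) (pconst 1).

Definition pchain_matrix :=
  let sum_k := pbsum 4 ptrial in
  let sum_i := pbsum 3 (PComp sum_k [PProj 2; PProj 0; PProj 1; PProj 2; PProj 3]) in
  let ex_c := pbex0 2 (PComp sum_i [pnlinks (PProj 2); PProj 0; PProj 1; PProj 2]) in
  PComp ex_c [ppow2 (ptri (padd (PProj 1) (pnlinks (PProj 0)))); PProj 1; PProj 0].

Lemma eval_pchain_matrix x y M N :
  eval (oracle3 a x y) pchain_matrix [M; N] (chain_matrix x y M N).
Proof.
  set (O := oracle3 a x y).
  econstructor.
  - constructor; [|repeat constructor].
    apply eval_ppow2, eval_ptri, eval_padd; [|apply eval_psucc, eval_pfst]; constructor.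
  - apply (eval_pbex0 O 2); [reflexivity|]. intros c.
    econstructor.
    { constructor; [apply eval_psucc, eval_pfst; constructor|]. repeat constructor. }
    apply (eval_pbsum O 3); [reflexivity|]. intros i.
    econstructor; [repeat constructor|].
    apply (eval_pbsum O 4); [reflexivity|]. intros k.
    apply eval_pifz; [|apply eval_pconst|apply eval_pconst].
    apply eval_ppred. econstructor; [|apply eval_psim].
    repeat constructor.
    + apply eval_psucc, eval_pfst. constructor.
    + apply eval_pdecode_nth; [constructor | apply eval_psnd; constructor].
Qed.
End Chains.

Lemma to_nat_lt_tri i q N nn : i <= nn -> q < N -> Cantor.to_nat (i, q) < tri (N + nn).
Proof.
  intros. rewrite to_nat_tri.
  pose proof (tri_mono (S (i + q)) (N + nn) ltac:(lia)). simpl in *. lia.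
Qed.

Section ChainMatrix.
Variable a : Cantor.
Variable p : prog.

Lemma chain_matrix_of_linked x y :
  linked a p x y -> exists M, forall N, chain_matrix a p x y M N = 0.
Proof.
  intros [n [ms [z [Hx [Hy Hlinks]]]]]. set (nn := S n).
  exists (Cantor.to_nat (n, encode_list (map ms (seq 0 nn)))). intros N.
  unfold chain_matrix. rewrite Cantor.cancel_of_to. cbn [fst snd]. fold nn.
  destruct (testbit_interpolate (tri (N + nn))
              (fun pos => z (fst (Cantor.of_nat pos)) (snd (Cantor.of_nat pos)))) as [c [Hc Hbits]].
  assert (Happrox : forall j, j <= nn -> forall q,
             chain_approx x y N c nn j q = 0 \/ chain_approx x y N c nn j q = S (Nat.b2n (z j q))).
  { intros j Hj q. destruct (Nat.lt_ge_cases q N).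
    - right. apply chain_approx_known; auto. intros _.
      rewrite Hbits by (apply to_nat_lt_tri; auto). rewrite Cantor.cancel_of_to. reflexivity.
    - left. apply chain_approx_unknown; auto. }
  apply bex0_eq0. exists c. split; auto.
  apply bsum_eq0. intros i Hi. apply bsum_eq0. intros k Hk.
  assert (Hm : decode_nth i (encode_list (map ms (seq 0 nn))) = ms i).
  { rewrite decode_encode_list by (rewrite length_map, length_seq; auto).
    rewrite nth_indep with (d' := ms 0) by (rewrite length_map, length_seq; auto).
    rewrite map_nth, seq_nth; auto. }
  rewrite Hm. unfold trial.
  destruct peval as [|r] eqn:E; [reflexivity|].
  apply (peval_sound a (z i) (z (S i)) _ _ _ (Happrox i ltac:(lia)) (Happrox (S i) ltac:(lia)))
    in E.
  rewrite (eval_det _ _ _ _ E _ (Hlinks i ltac:(lia) k)). reflexivity.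
Qed.

Lemma chain_matrix_witness x y M N :
  chain_matrix a p x y M N = 0 ->
  let nn := S (fst (Cantor.of_nat M)) in
  exists c, forall i k, i < nn -> k < N ->
    trial a p x y N c nn i (decode_nth i (snd (Cantor.of_nat M))) k = 0.
Proof.
  intros [c [_ Hc]]%bex0_eq0 nn. exists c. intros i k Hi Hk.
  rewrite bsum_eq0 in Hc. specialize (Hc i Hi). rewrite bsum_eq0 in Hc. auto.
Qed.

Hypothesis Htotal : forall u w m k, exists r, eval (oracle3 a u w) p [m; k] r.

(* The inner members of the chain are a cluster point of the witnesses [c]
   found for larger and larger [N]. *)
Lemma linked_of_chain_matrix x y :
  (exists M, forall N, chain_matrix a p x y M N = 0) -> linked a p x y.
Proof.
  intros [M HM].
  set (nn := S (fst (Cantor.of_nat M))).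
  set (ms := fun i => decode_nth i (snd (Cantor.of_nat M))).
  assert (Hwit : forall N, {c | forall i k, i < nn -> k < N -> trial a p x y N c nn i (ms i) k = 0})
    by (intros N; apply constructive_indefinite_description, chain_matrix_witness, HM).
  set (cN := fun N => proj1_sig (Hwit N)).
  destruct (cantor_cluster_point (fun N pos => Nat.testbit (cN N) pos)) as [Zb HZ].
  set (z := fun i q => if i =? 0 then x q else if i =? nn then y q else Zb (Cantor.to_nat (i, q))).
  assert (Hz0 : z 0 = x) by (apply functional_extensionality; reflexivity).
  assert (Hznn : z nn = y).
  { apply functional_extensionality. intros q. unfold z. rewrite Nat.eqb_refl. reflexivity. }
  exists (fst (Cantor.of_nat M)), ms, z. split; [|split]; auto.
  intros i Hi k.
  destruct (Htotal (z i) (z (S i)) (ms i) k) as [r Hr].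
  destruct (peval_complete a (z i) (z (S i)) _ _ _ Hr) as [B HB].
  destruct (HZ (tri (B + nn)) (max B (S k))) as [N [HN Hagree]].
  assert (Happrox : forall j, j <= nn -> forall q, q < B ->
             chain_approx x y N (cN N) nn j q = S (Nat.b2n (z j q))).
  { intros j Hj q Hq. apply chain_approx_known; auto; [lia|].
    intros Hj'. unfold z.
    replace (j =? 0) with false by (symmetry; apply Nat.eqb_neq; lia).
    replace (j =? nn) with false by (symmetry; apply Nat.eqb_neq; lia).
    apply Hagree, to_nat_lt_tri; lia. }
  assert (Hrun : peval a (chain_approx x y N (cN N) nn i) (chain_approx x y N (cN N) nn (S i))
                   N p [ms i; k] = S r).
  { apply HB; [lia|]. intros q Hq. split; apply Happrox; lia. }
  pose proof (proj2_sig (Hwit N) i k ltac:(lia) ltac:(lia)) as Htrial.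
  fold (cN N) in Htrial. unfold trial in Htrial. rewrite Hrun in Htrial.
  destruct r; [exact Hr | discriminate].
Qed.

Lemma sigma02_linked : Sigma02_rel a (linked a p).
Proof.
  exists (pchain_matrix p). split.
  - intros x y M N. eexists. apply eval_pchain_matrix.
  - intros x y. split.
    + intros [M HM]%chain_matrix_of_linked. exists M. intros N. rewrite <- (HM N).
      apply eval_pchain_matrix.
    + intros [M HM]. apply linked_of_chain_matrix. exists M. intros N.
      symmetry. eapply eval_det; [apply (HM N) | apply eval_pchain_matrix].
Qed.
End ChainMatrix.

(** * Graphs *)

(* Adds the diagonal, with witness [0]. *)
Definition prefl p :=
  pifz (PProj 0) (pxor (porc 1 (PProj 1)) (porc 2 (PProj 1))) (PComp p [ppred (PProj 0); PProj 1]).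

Section Reflexive.
Variable a : Cantor.
Variable p : prog.
Hypothesis Htotal : forall u w m k, exists r, eval (oracle3 a u w) p [m; k] r.

Lemma eval_prefl u w m k r :
  eval (oracle3 a u w) p [pred m; k] r ->
  eval (oracle3 a u w) (prefl p) [m; k] (ifz m (Nat.b2n (xorb (u k) (w k))) r).
Proof.
  intros Hr. apply eval_pifz; [constructor | |].
  - apply eval_pxor; apply eval_porc; constructor.
  - eapply eval_comp2; eauto; [apply eval_ppred|]; constructor.
Qed.

Lemma prefl_total u w m k : exists r, eval (oracle3 a u w) (prefl p) [m; k] r.
Proof. destruct (Htotal u w (pred m) k) as [r Hr]. eexists. apply eval_prefl, Hr. Qed.

Lemma link_prefl m u w :
  link a (prefl p) m u w <-> (m = 0 /\ u = w) \/ (exists m', m = S m' /\ link a p m' u w).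
Proof.
  split.
  - intros H. destruct m as [|m]; [left | right; exists m]; split; auto.
    + apply functional_extensionality. intros k. apply Bool.xorb_eq.
      destruct (Htotal u w 0 k) as [r Hr].
      pose proof (eval_det _ _ _ _ (H k) _ (eval_prefl u w 0 k r Hr)) as E.
      destruct (xorb (u k) (w k)); [discriminate | reflexivity].
    + intros k. destruct (Htotal u w m k) as [r Hr].
      pose proof (eval_det _ _ _ _ (H k) _ (eval_prefl u w (S m) k r Hr)) as E.
      simpl in E. subst. exact Hr.
  - intros [[-> <-] | [m' [-> Hm]]] k.
    + destruct (Htotal u u 0 k) as [r Hr].
      pose proof (eval_prefl u u 0 k r Hr) as E. simpl in E.
      rewrite Bool.xorb_nilpotent in E. exact E.
    + apply (eval_prefl u w (S m') k 0), Hm.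
Qed.

Variable G : Cantor -> Cantor -> Prop.
Hypothesis HG : forall x y, G x y <-> exists m, link a p m x y.

Lemma linked_of_clos_refl_trans x y : clos_refl_trans Cantor G x y -> linked a (prefl p) x y.
Proof.
  intros H. apply clos_rt_rt1n_iff in H. induction H as [x|x x' y Hx _ [n [ms [z [Hz0 [Hzn Hl]]]]]].
  - exists 0, (fun _ => 0), (fun _ => x). repeat split; auto.
    intros i _. apply link_prefl. left; auto.
  - apply HG in Hx as [m Hm].
    exists (S n), (fun i => match i with 0 => S m | S i => ms i end),
      (fun i => match i with 0 => x | S i => z i end).
    repeat split; auto.
    intros [|i] Hi; apply link_prefl.
    + right. exists m. rewrite Hz0. auto.
    + apply link_prefl, Hl. lia.
Qed.

Lemma clos_refl_trans_of_linked x y : linked a (prefl p) x y -> clos_refl_trans Cantor G x y.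
Proof.
  intros [n [ms [z [<- [<- Hl]]]]].
  enough (Hi : forall i, i <= S n -> clos_refl_trans Cantor G (z 0) (z i)) by auto.
  induction i as [|i IH]; intros Hi; [apply rt_refl|].
  eapply rt_trans; [apply IH; lia|].
  destruct (proj1 (link_prefl _ _ _) (Hl i ltac:(lia))) as [[_ <-] | [m [_ Hm]]].
  - apply rt_refl.
  - apply rt_step, HG. eauto.
Qed.
End Reflexive.

Lemma sigma02_of_graphable a E : graphable (Sigma02_rel a) E -> Sigma02_rel a E.
Proof.
  intros [G [_ [[p [Htotal HG]] Hrt]]].
  destruct (sigma02_linked a (prefl p) (prefl_total a p Htotal)) as [q [Hq_total Hq]].
  exists q. split; auto. intros x y. rewrite <- Hrt, <- Hq. split.
  - apply (linked_of_clos_refl_trans a p Htotal G HG).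
  - apply (clos_refl_trans_of_linked a p Htotal G HG).
Qed.

Lemma clos_refl_trans_irreflexive {A} (E : relation A) :
  equivalence A E -> forall x y, clos_refl_trans A (fun u v => E u v /\ u <> v) x y <-> E x y.
Proof.
  intros [Hrefl Htrans Hsym] x y. split.
  - induction 1 as [x y [H _]| |]; eauto.
  - intros H. destruct (classic (x = y)) as [<-|]; [apply rt_refl | apply rt_step; auto].
Qed.

(* A witness [Cantor.to_nat (m, j)] adds a coordinate [j] where [x] and [y] differ. *)
Definition pirreflexive p :=
  padd (PComp p [pfst (PProj 0); PProj 1])
    (pifz (pxor (porc 1 (psnd (PProj 0))) (porc 2 (psnd (PProj 0)))) (pconst 1) (pconst 0)).

Lemma eval_pirreflexive a x y p M n r :
  eval (oracle3 a x y) p [fst (Cantor.of_nat M); n] r ->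
  eval (oracle3 a x y) (pirreflexive p) [M; n]
    (r + Nat.b2n (Bool.eqb (x (snd (Cantor.of_nat M))) (y (snd (Cantor.of_nat M))))).
Proof.
  intros Hr. apply eval_padd.
  - eapply eval_comp2; eauto; [apply eval_pfst|]; constructor.
  - set (j := snd (Cantor.of_nat M)).
    replace (Nat.b2n (Bool.eqb (x j) (y j))) with (ifz (Nat.b2n (xorb (x j) (y j))) 1 0)
      by (destruct (x j), (y j); reflexivity).
    apply eval_pifz; [|apply eval_pconst|apply eval_pconst].
    apply eval_pxor; apply eval_porc, eval_psnd; constructor.
Qed.

Lemma sigma02_irreflexive a E : Sigma02_rel a E -> Sigma02_rel a (fun x y => E x y /\ x <> y).
Proof.
  intros [p [Htotal HE]]. exists (pirreflexive p). split.
  - intros x y M n. destruct (Htotal x y (fst (Cantor.of_nat M)) n) as [r Hr].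
    eexists. apply eval_pirreflexive, Hr.
  - intros x y. split.
    + intros [[m Hm]%HE Hxy].
      assert (Hj : exists j, x j <> y j).
      { apply NNPP. intros Hnot. apply Hxy, functional_extensionality. intros j.
        destruct (Bool.bool_dec (x j) (y j)); auto. exfalso; eauto. }
      destruct Hj as [j Hj]. exists (Cantor.to_nat (m, j)). intros n.
      pose proof (eval_pirreflexive a x y p (Cantor.to_nat (m, j)) n 0) as H.
      rewrite Cantor.cancel_of_to in H. cbn [fst snd] in H.
      destruct (x j), (y j); try congruence; apply H, Hm.
    + intros [M HM].
      assert (Hboth : forall n, eval (oracle3 a x y) p [fst (Cantor.of_nat M); n] 0 /\
                      Bool.eqb (x (snd (Cantor.of_nat M))) (y (snd (Cantor.of_nat M))) = false).
      { intros n. destruct (Htotal x y (fst (Cantor.of_nat M)) n) as [r Hr].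
        pose proof (eval_det _ _ _ _ (HM n) _ (eval_pirreflexive a x y p M n r Hr)) as Hsum.
        destruct r, Bool.eqb; try discriminate. auto. }
      split.
      * apply HE. exists (fst (Cantor.of_nat M)). intros n. apply Hboth.
      * intros <-. destruct (Hboth 0) as [_ Hneq]. rewrite Bool.eqb_reflx in Hneq. discriminate.
Qed.

Lemma graphable_of_sigma02 a E :
  equivalence Cantor E -> Sigma02_rel a E -> graphable (Sigma02_rel a) E.
Proof.
  intros HE HS. exists (fun x y => E x y /\ x <> y). repeat split.
  - apply HE; tauto.
  - intros ->; tauto.
  - intros x [_ Hx]. auto.
  - apply sigma02_irreflexive, HS.
  - apply clos_refl_trans_irreflexive; auto.
  - apply clos_refl_trans_irreflexive; auto.
Qed.

Theorem theorem3p10 :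
  (forall E : Cantor -> Cantor -> Prop,
      equivalence Cantor E -> (graphable Sigma02 E <-> Sigma02 E)) /\
  (forall (a : Cantor) (E : Cantor -> Cantor -> Prop),
      equivalence Cantor E ->
      (graphable (Sigma02_rel a) E <-> Sigma02_rel a E)).
Proof.
  assert (Hrel : forall a E, equivalence Cantor E ->
                   (graphable (Sigma02_rel a) E <-> Sigma02_rel a E)).
  { intros a E HE. split; [apply sigma02_of_graphable | apply graphable_of_sigma02; auto]. }
  split; [intros E; apply (Hrel (fun _ => false)) | exact Hrel].
Qed.
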